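(* There exists a constant $c>0$ such that for all even $n>2$ and all odd $d>1$, the set $\mathrm{Zer}_1(d,n)=\{A\in\Omega_1(d,n):\operatorname{Per}(A)=0\}$ has dimension at least $cn^{3/2}$; that is, there is a set $V$ of vertices of $\Omega_1(d,n)$ whose convex hull is contained in $\mathrm{Zer}_1(d,n)$ and has affine dimension at least $cn^{3/2}$.
   Context: Let $I_n=\{1,\dots,n\}$. A $d$-dimensional matrix of order $n$ is a function $I_n^d\to\mathbb R$. A line is the set of positions obtained by varying one coordinate and fixing the others. A diagonal is a selection of $n$ positions any two of which differ in every coordinate; $\operatorname{Per}(A)$ is the sum over diagonals of the product of the entries on the diagonal. $\Omega_1(d,n)$ is the convex polytope of non-negative $d$-dimensional matrices of order $n$ whose entries in each line sum to $1$. The dimension of $\mathrm{Zer}_1(d,n)$ is the maximum dimension of a polytope $\mathrm{Hull}(V)$, $V$ a set of vertices of $\Omega_1(d,n)$, with $\mathrm{Hull}(V)\subseteq\mathrm{Zer}_1(d,n)$. *)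

From HB Require Import structures.
From mathcomp Require Import all_boot all_order all_algebra.
From mathcomp Require Import reals.
Set Implicit Arguments. Unset Strict Implicit. Unset Printing Implicit Defensive.
Import Order.TTheory GRing.Theory Num.Theory.
Local Open Scope ring_scope.

(* Positions of a d-dimensional matrix of order n: elements of I_n^d,
   encoded as functions 'I_d -> 'I_n (coordinates 0..n-1). *)
Definition pos (d n : nat) := {ffun 'I_d -> 'I_n}.

Definition dmat (R : realType) (d n : nat) := {ffun pos d n -> R}.

Definition upd (d n : nat) (p : pos d n) (k : 'I_d) (i : 'I_n) : pos d n :=
  [ffun j => if j == k then i else p j].

(* A is in Omega_1(d,n): non-negative, every line sums to 1.
   The line through p in direction k is {upd p k i | i < n}. *)
Definition in_Omega1 (R : realType) (d n : nat) (A : dmat R d n) : Prop :=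
  (forall p, 0 <= A p) /\
  (forall (k : 'I_d) (p : pos d n), \sum_(i < n) A (upd p k i) = 1).

Definition is_diagonal (d n : nat) (D : {set pos d n}) : bool :=
  (#|D| == n) &&
  [forall p in D, forall q in D, (p != q) ==> [forall k, p k != q k]].

Definition Per (R : realType) (d n : nat) (A : dmat R d n) : R :=
  \sum_(D : {set pos d n} | is_diagonal D) \prod_(p in D) A p.

Definition in_Zer1 (R : realType) (d n : nat) (A : dmat R d n) : Prop :=
  in_Omega1 A /\ Per A = 0.

Definition is_vertex (R : realType) (d n : nat) (A : dmat R d n) : Prop :=
  in_Omega1 A /\
  forall (B C : dmat R d n) (t : R),
    in_Omega1 B -> in_Omega1 C -> 0 < t < 1 ->
    (forall p, A p = t * B p + (1 - t) * C p) -> B = A /\ C = A.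

Definition in_hull (R : realType) (d n : nat) (V : seq (dmat R d n))
    (A : dmat R d n) : Prop :=
  exists lam : 'I_(size V) -> R,
    (forall i, 0 <= lam i) /\ \sum_i lam i = 1 /\
    forall p, A p = \sum_i lam i * (nth 0 V i) p.

(* Affine dimension of Hull(V) (= dimension of the affine hull of V) for
   nonempty V: rank of the family of differences V_i - V_0, each matrix
   viewed as a row vector indexed by the positions. *)
Definition aff_dim (R : realType) (d n : nat) (V : seq (dmat R d n)) : nat :=
  \rank (\matrix_(i < size V, j < #|pos d n|)
           ((nth 0 V i) (enum_val j) - (nth 0 V 0) (enum_val j))).

From HB Require Import structures.
From mathcomp Require Import all_boot all_order all_algebra.
From mathcomp Require Import reals.
From mathcomp Require Import zify lra.
Set Implicit Arguments. Unset Strict Implicit. Unset Printing Implicit Defensive.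
Import Order.TTheory GRing.Theory Num.Theory.

(* Write d = t + 2 with t odd.  A Latin square F of order n yields the 0/1
   matrix whose entry at p is 1 iff p_0 = F(p_1, p_2 + ... + p_(d-1) mod n),
   a vertex of Omega_1(d,n).  Call F L-banded if it agrees with the cyclic
   square (y + z) mod n wherever that value is at least L, and takes values
   below L elsewhere.  Let D be a diagonal inside the union of the supports of
   L-banded squares and put c(p) = p_1 + ... + p_(d-1) mod n.  Then
   c(p) = p_0 when p_0 >= L and c(p) < L when p_0 < L; as every coordinate
   runs through 0..n-1 along D, summing gives
     t C(n,2) + C(L,2) = sum of c(p) over the L positions with p_0 < L
   modulo n.  The right side lies in [0, L(L-1)], while for n even and t odd
   the left side is n/2 + C(L,2) modulo n: a contradiction once L(L-1) < n.
   So every diagonal meets a common zero of all L-banded squares, and the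
   hull of their matrices lies in Zer_1.  With L = 2m + 2 close to sqrt n, a
   banded base square has (n/2) m intercalates inside the band; switching
   them one at a time gives affinely independent vertices, hence dimension at
   least (n/2) m + 1, of order n^(3/2). *)

Definition row_injective n (F : nat -> nat -> nat) := forall y z1 z2,
  y < n -> z1 < n -> z2 < n -> F y z1 = F y z2 -> z1 = z2.

Definition col_injective n (F : nat -> nat -> nat) := forall z y1 y2,
  z < n -> y1 < n -> y2 < n -> F y1 z = F y2 z -> y1 = y2.

Definition banded n L (F : nat -> nat -> nat) := forall y z,
  ((y + z) %% n < L -> F y z < L) /\ (L <= (y + z) %% n -> F y z = (y + z) %% n).

Definition band_latin n L F := [/\ row_injective n F, col_injective n F & banded n L F].

Lemma banded_lt n L F y z : banded n L F -> L <= n -> 0 < n -> F y z < n.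
Proof.
move=> /(_ y z) [lo hi] Ln n0; case: (ltnP ((y + z) %% n) L) => [/lo FL|/hi ->].
  exact: leq_trans Ln.
exact: ltn_pmod.
Qed.

Definition swap_val (a b v : nat) : nat := if v == a then b else if v == b then a else v.

Lemma swap_val_inj a b : injective (swap_val a b).
Proof. by move=> v w; rewrite /swap_val; repeat case: ifP => /eqP; lia. Qed.

Lemma swap_val_id a b v : v != a -> v != b -> swap_val a b v = v.
Proof. by rewrite /swap_val => /negbTE -> /negbTE ->. Qed.

Lemma banded_swap_val n L F a b : a < L -> b < L -> banded n L F ->
  banded n L (fun y z => swap_val a b (F y z)).
Proof.
move=> aL bL FL y z; have [lo hi] := FL y z; split.
  by move=> /lo; rewrite /swap_val; repeat case: ifP => /eqP; lia.
by move=> /[dup] /hi ->; rewrite /swap_val; repeat case: ifP => /eqP; lia.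
Qed.

Lemma band_latin_swap_val n L F a b : a < L -> b < L -> band_latin n L F ->
  band_latin n L (fun y z => swap_val a b (F y z)).
Proof.
move=> aL bL [Frow Fcol FL]; split; last exact: banded_swap_val.
- by move=> y z1 z2 yn z1n z2n /swap_val_inj; apply: Frow.
- by move=> z y1 y2 zn y1n y2n /swap_val_inj; apply: Fcol.
Qed.

Definition intercalate (F : nat -> nat -> nat) r1 r2 c1 c2 a b :=
  [/\ F r1 c1 = a, F r2 c2 = a, F r1 c2 = b & F r2 c1 = b].

Definition swap_cells (F : nat -> nat -> nat) r1 r2 c1 c2 a b y z :=
  if ((y == r1) || (y == r2)) && ((z == c1) || (z == c2)) then swap_val a b (F y z)
  else F y z.

Definition transpose (F : nat -> nat -> nat) y z := F z y.

Lemma swap_cells_transpose F r1 r2 c1 c2 a b :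
  swap_cells (transpose F) c1 c2 r1 r2 a b =2 transpose (swap_cells F r1 r2 c1 c2 a b).
Proof. by move=> z y; rewrite /swap_cells /transpose andbC. Qed.

Lemma intercalate_transpose F r1 r2 c1 c2 a b :
  intercalate F r1 r2 c1 c2 a b -> intercalate (transpose F) c1 c2 r1 r2 a b.
Proof. by case. Qed.

Lemma swap_cells_row n F r1 r2 c1 c2 a b y z :
  r1 < n -> r2 < n -> c1 < n -> c2 < n -> intercalate F r1 r2 c1 c2 a b ->
  row_injective n F -> (y == r1) || (y == r2) -> z < n ->
  swap_cells F r1 r2 c1 c2 a b y z = swap_val a b (F y z).
Proof.
move=> r1n r2n c1n c2n [e11 e22 e12 e21] Frow yr zn.
rewrite /swap_cells yr /=; case: ifP => // /norP [zc1 zc2].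
have yn : y < n by case/orP: yr => /eqP->.
have Fne c : c < n -> z != c -> F y z != F y c.
  by move=> cn; apply: contra_neq => /Frow; apply.
have [ne1 ne2] := (Fne c1 c1n zc1, Fne c2 c2n zc2).
by case/orP: yr ne1 ne2 => /eqP->; rewrite ?e11 ?e12 ?e21 ?e22 => ne1 ne2;
  rewrite swap_val_id // eq_sym.
Qed.

Lemma swap_cells_col n F r1 r2 c1 c2 a b y z :
  r1 < n -> r2 < n -> c1 < n -> c2 < n -> intercalate F r1 r2 c1 c2 a b ->
  col_injective n F -> (z == c1) || (z == c2) -> y < n ->
  swap_cells F r1 r2 c1 c2 a b y z = swap_val a b (F y z).
Proof.
move=> r1n r2n c1n c2n /intercalate_transpose FT Fcol zc yn.
by rewrite -[LHS]swap_cells_transpose (swap_cells_row c1n c2n r1n r2n FT).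
Qed.

Lemma band_latin_swap_cells n L F r1 r2 c1 c2 a b :
  r1 < n -> r2 < n -> c1 < n -> c2 < n -> a < L -> b < L ->
  intercalate F r1 r2 c1 c2 a b -> band_latin n L F ->
  band_latin n L (swap_cells F r1 r2 c1 c2 a b).
Proof.
move=> r1n r2n c1n c2n aL bL FI [Frow Fcol FL]; split.
- move=> y z1 z2 yn z1n z2n; case yr: ((y == r1) || (y == r2)).
    by rewrite !(swap_cells_row r1n r2n c1n c2n FI) // => /swap_val_inj; apply: Frow.
  by rewrite /swap_cells yr; apply: Frow.
- move=> z y1 y2 zn y1n y2n; case zc: ((z == c1) || (z == c2)).
    by rewrite !(swap_cells_col r1n r2n c1n c2n FI) // => /swap_val_inj; apply: Fcol.
  by rewrite /swap_cells zc !andbF; apply: Fcol.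
- move=> y z; rewrite /swap_cells; case: ifP => _; last exact: FL.
  exact: banded_swap_val aL bL FL y z.
Qed.

(* The cyclic square, except that odd rows shift the even symbols
   0, 2, ..., 2m of the band down by 2 (cyclically); this plants the
   intercalates of [base_sq_intercalate]. *)
Definition base_symbol m y a :=
  if [&& odd y, ~~ odd a & a < 2 * m + 2] then (if a == 0 then 2 * m else a - 2) else a.

Definition base_sq n m y z := base_symbol m y ((y + z) %% n).

Lemma base_symbol_inj m y : injective (base_symbol m y).
Proof. by move=> a1 a2; rewrite /base_symbol; repeat case: ifP; lia. Qed.

Lemma odd_base_symbol m y a : odd (base_symbol m y a) = odd a.
Proof. by rewrite /base_symbol; repeat case: ifP; lia. Qed.

Lemma base_symbol_odd m y1 y2 : odd y1 = odd y2 -> base_symbol m y1 =1 base_symbol m y2.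
Proof. by move=> py a; rewrite /base_symbol py. Qed.

Lemma band_latin_base_sq n m : ~~ odd n -> band_latin n (2 * m + 2) (base_sq n m).
Proof.
move=> /negbTE even_n; split.
- move=> y z1 z2 _ z1n z2n /base_symbol_inj /eqP.
  by rewrite eqn_modDl !modn_small // => /eqP.
- move=> z y1 y2 _ y1n y2n e; suff: (y1 + z) %% n = (y2 + z) %% n.
    by move/eqP; rewrite eqn_modDr !modn_small // => /eqP.
  have [py|py] := eqVneq (odd y1) (odd y2).
    by apply: (@base_symbol_inj m y1); rewrite [RHS](base_symbol_odd m py).
  move: (congr1 odd e) py; rewrite /base_sq !odd_base_symbol !odd_mod // !oddD.
  by case: (odd y1); case: (odd y2); case: (odd z).
- by move=> y z; rewrite /base_sq /base_symbol; split; repeat case: ifP; lia.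
Qed.

Definition cyc_col n i x := (x + (n - i)) %% n.

Lemma cyc_colK n i k x : i <= n -> (i + k + cyc_col n i x) %% n = (k + x) %% n.
Proof.
move=> le_in; rewrite modnDmr.
have -> : i + k + (x + (n - i)) = k + x + n by lia.
exact: modnDr.
Qed.

Lemma cyc_col_inj n i x1 x2 : i <= n -> x1 < n -> x2 < n ->
  cyc_col n i x1 = cyc_col n i x2 -> x1 = x2.
Proof.
move=> le_in x1n x2n e; have := cyc_colK 0 x2 le_in; rewrite -e cyc_colK //.
by rewrite !add0n !modn_small.
Qed.

Lemma base_sq_intercalate n m I D : 2 * I + 1 < n -> D < m -> 2 * m + 2 <= n ->
  intercalate (base_sq n m) (2 * I) (2 * I + 1)
    (cyc_col n (2 * I) (2 * D)) (cyc_col n (2 * I) (2 * D + 1)) (2 * D) (2 * D + 1).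
Proof.
move=> In Dm mn; have le_In : 2 * I <= n by lia.
have cell0 x : x < n -> (2 * I + cyc_col n (2 * I) x) %% n = x.
  by move=> xn; have := cyc_colK 0 x le_In; rewrite addn0 add0n (modn_small xn).
have cell1 x : x.+1 < n -> (2 * I + 1 + cyc_col n (2 * I) x) %% n = x.+1.
  by move=> xn; rewrite cyc_colK // modn_small.
split; rewrite /base_sq ?cell0 ?cell1 /base_symbol; try lia;
  by rewrite /= ?oddD ?odd_mul /=; repeat case: ifP; lia.
Qed.

Definition intercalate_swap n m I D :=
  swap_cells (base_sq n m) (2 * I) (2 * I + 1)
    (cyc_col n (2 * I) (2 * D)) (cyc_col n (2 * I) (2 * D + 1)) (2 * D) (2 * D + 1).

(* Member 1 supplies the extra dimension that matters when m = 0. *)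
Definition sq_family n m j :=
  match j with
  | 0 => base_sq n m
  | 1 => fun y z => swap_val (2 * m) (2 * m + 1) (base_sq n m y z)
  | b.+2 => intercalate_swap n m (b %/ m) (b %% m)
  end.
Arguments sq_family : simpl never.

Lemma band_latin_sq_family n m j : ~~ odd n -> 2 * m + 2 <= n ->
  j < n %/ 2 * m + 2 -> band_latin n (2 * m + 2) (sq_family n m j).
Proof.
move=> even_n mn; have base := band_latin_base_sq m even_n.
case: j => [|[|b]] jn; rewrite /sq_family;
  [exact: base | by apply: band_latin_swap_val base; lia |].
have m0 : 0 < m by case: m jn {mn base}; rewrite ?muln0.
have Dm : b %% m < m by rewrite ltn_mod.
have In : b %/ m < n %/ 2 by rewrite ltn_divLR //; lia.
have FI := @base_sq_intercalate n m (b %/ m) (b %% m) ltac:(lia) Dm mn.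
by apply: band_latin_swap_cells FI base; rewrite ?ltn_pmod; lia.
Qed.

Lemma sq_family_corner n m j : 2 * m + 2 <= n -> j < n %/ 2 * m + 2 ->
  (2 * m == sq_family n m j 0 (2 * m + 1)) = (j == 1).
Proof.
move=> mn; have base : base_sq n m 0 (2 * m + 1) = 2 * m + 1.
  by rewrite /base_sq add0n modn_small; last lia.
case: j => [|[|b]] jn; rewrite /sq_family ?base.
- lia.
- by rewrite /swap_val; repeat case: ifP; lia.
have m0 : 0 < m by case: m jn {mn base}; rewrite ?muln0.
have Dm : b %% m < m by rewrite ltn_mod.
by rewrite /intercalate_swap /swap_cells base; case: ifP => _; rewrite ?swap_val_id; lia.
Qed.

Lemma sq_family_cell n m j b : 2 * m + 2 <= n -> b < n %/ 2 * m ->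
  let I := b %/ m in let D := b %% m in
  (2 * D + 1 == sq_family n m j (2 * I) (cyc_col n (2 * I) (2 * D))) = (j == b.+2).
Proof.
move=> mn bn I D.
have m0 : 0 < m by case: m bn {mn I D}; rewrite ?muln0.
have Dm : D < m by rewrite ltn_mod.
have In : I < n %/ 2 by rewrite ltn_divLR //; lia.
have [e0 _ _ _] := @base_sq_intercalate n m I D ltac:(lia) Dm mn.
case: j => [|[|b']]; rewrite /sq_family ?e0.
- lia.
- by rewrite swap_val_id; lia.
rewrite /intercalate_swap /swap_cells e0 eqSS.
have [->|ne] := eqVneq b' b; first by rewrite -/I -/D !eqxx /= /swap_val !eqxx.
case: ifP => [/andP [row col] | _]; last lia.
have D'm : b' %% m < m by rewrite ltn_mod.
have eI : I = b' %/ m by case/orP: row => /eqP; lia.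
rewrite eI in col; have le_In : 2 * (b' %/ m) <= n by lia.
case/orP: col => /eqP /(cyc_col_inj le_In) eD; last by have := eD ltac:(lia) ltac:(lia); lia.
case/eqP: ne; rewrite (divn_eq b m) (divn_eq b' m) -/I -/D eI.
by have := eD ltac:(lia) ltac:(lia) => /eqP; rewrite eqn_pmul2l // => /eqP ->.
Qed.

Lemma bin2_double n : 'C(n, 2).*2 = n * n.-1.
Proof. by case: n => // n; rewrite bin2 halfK oddM /= andNb subn0. Qed.

Lemma odd_mul_bin2_mod h t : odd t -> t * 'C(h.*2, 2) = h %[mod h.*2].
Proof.
move=> odd_t; case: h => [|h]; first by rewrite bin0n muln0.
have eC : 'C(h.+1.*2, 2) = h.+1 * h.+1.*2.-1.
  by apply: double_inj; rewrite bin2_double doubleMl.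
have [q eq] : exists q, t * h.+1.*2.-1 = q.*2.+1.
  exists (t * h.+1.*2.-1)./2; rewrite -[LHS]odd_double_half oddM odd_t.
  by rewrite doubleS /= odd_double.
rewrite eC mulnCA eq (_ : h.+1 * q.*2.+1 = q * h.+1.*2 + h.+1) ?modnMDl //; lia.
Qed.

Lemma sum_ord_lt_bin2 L n : L <= n -> \sum_(i < n | i < L) i = 'C(L, 2).
Proof. by move=> Ln; rewrite -(big_ord_widen _ (fun i => i)) // -bin2_sum big_mkord. Qed.

Lemma leq_of_mul_pred_lt L n : L * L.-1 < n -> L <= n.
Proof. by case: L => [|[|L]] /=; nia. Qed.

Lemma no_band_residue n t L A : ~~ odd n -> odd t -> L * L.-1 < n -> A <= L * L.-1 ->
  t * 'C(n, 2) + 'C(L, 2) = A %[mod n] -> False.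
Proof.
move=> even_n odd_t Ln AL; rewrite -[n]odd_double_half (negbTE even_n) add0n in Ln *.
set h := n./2 in Ln *; rewrite -modnDml odd_mul_bin2_mod // modnDml.
rewrite -bin2_double in Ln AL; rewrite !modn_small; lia.
Qed.

Lemma exists_band_width n : 2 < n ->
  exists m, (2 * m + 2) * (2 * m + 2).-1 < n /\ n <= (2 * m + 4) * (2 * m + 3).
Proof.
move=> n_gt2; pose fits i := (2 * i + 2) * (2 * i + 1) < n.
have fits0 : exists i, fits i by exists 0; rewrite /fits; lia.
have fits_le i : fits i -> i <= n by rewrite /fits; nia.
case: (ex_maxnP fits0 fits_le) => m fit_m maxm; exists m; split.
  by rewrite -subn1; move: fit_m; rewrite /fits; lia.
by rewrite leqNgt; apply/negP => lt_n; have := maxm m.+1; rewrite /fits; lia.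
Qed.

Lemma upd_same d n (p : pos d n) k i : upd p k i k = i.
Proof. by rewrite ffunE eqxx. Qed.

Lemma upd_other d n (p : pos d n) k i k' : k' != k -> upd p k i k' = p k'.
Proof. by rewrite ffunE => /negbTE ->. Qed.

Lemma diagonal_sum d n (D : {set pos d n}) k (G : 'I_n -> nat) : is_diagonal D ->
  \sum_(p in D) G (p k) = \sum_i G i.
Proof.
case/andP => /eqP cardD /forall_inP Ddiff.
have k_inj : {in D &, injective (fun p : pos d n => p k)}.
  move=> p q pD qD epq; apply/eqP; apply: contraT => npq.
  by have /forall_inP /(_ q qD) /implyP /(_ npq) /forallP /(_ k) := Ddiff p pD; rewrite epq eqxx.
have imD : [set (p : pos d n) k | p in D] = [set: 'I_n].
  by apply/eqP; rewrite eqEcard subsetT cardsT card_ord /= card_in_imset // cardD.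
by rewrite -(big_imset _ k_inj) /= imD; apply: eq_bigl => i; rewrite inE.
Qed.

Lemma diagonal_sum_cond d n (D : {set pos d n}) k (P : pred nat) (G : nat -> nat) :
  is_diagonal D -> \sum_(p in D | P (p k)) G (p k) = \sum_(i < n | P i) G i.
Proof.
move=> diagD; rewrite big_mkcondr [RHS]big_mkcond /=.
exact: (diagonal_sum _ (fun i : 'I_n => if P i then G i else 0) diagD).
Qed.

Definition k0 {t} : 'I_t.+2 := ord0.
Definition k1 {t} : 'I_t.+2 := lift ord0 ord0.

Section Positions.
Variables t n : nat.

Definition tail_sum (p : pos t.+2 n) := \sum_(k < t.+2 | 2 <= k) p k.

Definition cyc (p : pos t.+2 n) := (p k1 + tail_sum p) %% n.

Definition band_pos L (p : pos t.+2 n) :=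
  if cyc p < L then p k0 < L else p k0 == cyc p :> nat.

Lemma tail_sum_upd_head p (k : 'I_t.+2) i : k < 2 -> tail_sum (upd p k i) = tail_sum p.
Proof.
move=> k2; apply: eq_bigr => k' k2'; rewrite upd_other //.
by apply: contraTneq k2' => ->; rewrite -ltnNge.
Qed.

Lemma tail_sum_upd_tail p (k : 'I_t.+2) i : 2 <= k ->
  tail_sum (upd p k i) = \sum_(k' < t.+2 | (2 <= k') && (k' != k)) p k' + i.
Proof.
move=> k2; rewrite /tail_sum (bigD1 k) //= upd_same addnC; congr (_ + _).
by apply: eq_bigr => k' /andP [_ nk]; rewrite upd_other.
Qed.

Section BandDiagonal.
Variables (L : nat) (D : {set pos t.+2 n}).
Hypotheses (diagD : is_diagonal D) (Ln : L <= n).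
Hypothesis band : forall p, p \in D -> band_pos L p.

Let sum_coord k : \sum_(p in D) p k = 'C(n, 2).
Proof. by rewrite (diagonal_sum _ (fun i : 'I_n => val i) diagD) -bin2_sum big_mkord. Qed.

Lemma band_diagonal_sum_le : \sum_(p in D | p k0 < L) cyc p <= L * L.-1.
Proof.
have -> : L * L.-1 = \sum_(p in D | p k0 < L) L.-1.
  rewrite (diagonal_sum_cond _ (fun i => i < L) (fun _ => L.-1) diagD).
  by rewrite -(big_ord_widen _ (fun _ => L.-1)) // sum_nat_const card_ord.
apply: leq_sum => p /andP [pD lowp]; rewrite -ltnS (ltn_predK lowp).
by have := band pD; rewrite /band_pos; case: ifP => // + /eqP e; rewrite -e lowp.
Qed.

Lemma band_diagonal_sum_mod :
  t * 'C(n, 2) + 'C(L, 2) = \sum_(p in D | p k0 < L) cyc p %[mod n].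
Proof.
set A := \sum_(p in D | _) _; set B := \sum_(p in D | ~~ (p k0 < L)) (p k0 : nat).
have eC : 'C(n, 2) = 'C(L, 2) + B.
  rewrite -(sum_coord k0) (bigID (fun p : pos t.+2 n => p k0 < L)) /=.
  by rewrite (diagonal_sum_cond _ (fun i => i < L) id diagD) sum_ord_lt_bin2.
have cycAB : \sum_(p in D) cyc p = A + B.
  rewrite (bigID (fun p : pos t.+2 n => p k0 < L)) /=; congr (_ + _); apply: eq_bigr.
  move=> p /andP [pD /negbTE hip]; have := band pD.
  by rewrite /band_pos hip; case: ifP => // _ /eqP.
have sum_tail : \sum_(p in D) tail_sum p = t * 'C(n, 2).
  rewrite /tail_sum exchange_big /= (eq_bigr _ (fun k _ => sum_coord k)).
  by rewrite big_mkcond !big_ord_recl /= sum_nat_const card_ord.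
apply/eqP; rewrite -(eqn_modDr B) -addnA -eC -cycAB /cyc modn_summ big_split /=.
by rewrite sum_coord sum_tail addnC.
Qed.

End BandDiagonal.

Lemma exists_off_band L (D : {set pos t.+2 n}) : ~~ odd n -> odd t -> L * L.-1 < n ->
  is_diagonal D -> exists2 p, p \in D & ~~ band_pos L p.
Proof.
move=> even_n odd_t Ln diagD; have Ln' := leq_of_mul_pred_lt Ln.
apply/exists_inP; rewrite -negb_forall_in; apply/negP => /forall_inP band.
apply: (no_band_residue even_n odd_t Ln (band_diagonal_sum_le diagD Ln' band)).
exact: band_diagonal_sum_mod.
Qed.

End Positions.

Local Open Scope ring_scope.

Section Omega1Facts.
Variable R : realType.

Lemma sum_indicator_inj n (G : nat -> nat) x :
  (forall i j, (i < n)%N -> (j < n)%N -> G i = G j -> i = j) ->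
  (forall i, (i < n)%N -> (G i < n)%N) -> (x < n)%N ->
  \sum_(i < n) (if x == G i then 1 else 0 : R) = 1.
Proof.
move=> Ginj Gn xn; pose G' (i : 'I_n) : 'I_n := Ordinal (Gn _ (ltn_ord i)).
have G'inj : injective G' by move=> i j [/Ginj] e; apply/val_inj/e.
transitivity (\sum_(i < n) (if x == i then 1 else 0 : R)).
  by rewrite [RHS](reindex_inj G'inj).
rewrite (bigD1 (Ordinal xn)) ?eqxx //= big1 ?addr0 //.
by move=> i; rewrite -(inj_eq val_inj) /= eq_sym => /negbTE ->.
Qed.

Variables d n : nat.

Lemma Omega1_le1 (X : dmat R d.+1 n) p : in_Omega1 X -> X p <= 1.
Proof.
case=> X0 X1; rewrite -(X1 ord0 p) (bigD1 (p ord0)) //=.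
have -> : upd p ord0 (p ord0) = p by apply/ffunP => k; rewrite ffunE; case: eqP => [->|].
by rewrite lerDl sumr_ge0.
Qed.

Lemma Omega1_01_vertex (A : dmat R d.+1 n) :
  in_Omega1 A -> (forall p, A p = 0 \/ A p = 1) -> is_vertex A.
Proof.
move=> A_Omega A01; split=> // B C t B_Omega C_Omega /andP [t0 t1] eA.
suff BCA p : B p = A p /\ C p = A p.
  by split; apply/ffunP => p; have [] := BCA p.
have [B0 B1] := (B_Omega.1 p, Omega1_le1 p B_Omega).
have [C0 C1] := (C_Omega.1 p, Omega1_le1 p C_Omega).
by have := eA p; case: (A01 p) => ->; split; nra.
Qed.

Lemma hull_Omega1 (V : seq (dmat R d n)) A :
  (forall X, X \in V -> in_Omega1 X) -> in_hull V A -> in_Omega1 A.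
Proof.
move=> V_Omega [lam [lam0 [lam1 eA]]].
have VO (i : 'I_(size V)) := V_Omega _ (mem_nth 0 (ltn_ord i)).
split=> [p | k p].
  by rewrite eA sumr_ge0 // => i _; rewrite mulr_ge0 // (VO i).1.
under eq_bigr do rewrite eA.
by rewrite exchange_big -lam1; apply: eq_bigr => i _; rewrite -mulr_sumr (VO i).2 mulr1.
Qed.

Lemma hull_Per_eq0 (V : seq (dmat R d n)) A :
  (forall D, is_diagonal D ->
     exists2 p, p \in D & forall i : 'I_(size V), nth 0 V i p = 0) ->
  in_hull V A -> Per A = 0.
Proof.
move=> V0 [lam [_ [_ eA]]]; rewrite /Per big1 // => D /V0 [p pD Vp0].
by rewrite (bigD1 p) //= eA big1 ?mul0r // => i _; rewrite Vp0 mulr0.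
Qed.

Lemma aff_dim_ge (V : seq (dmat R d n)) K (q : 'I_K -> pos d n) :
  size V = K.+1 ->
  (forall i j : 'I_K, nth 0 V i.+1 (q j) - nth 0 V 0 (q j) = (i == j)%:R) ->
  (K <= aff_dim V)%N.
Proof.
move=> sizeV Vq; rewrite /aff_dim.
set M := \matrix_(i, j) _.
pose P : 'M[R]_(#|pos d n|, K) := \matrix_(j, b) (enum_val j == q b)%:R.
pose Q : 'M[R]_(K, size V) := \matrix_(b, i) ((i : nat) == b.+1)%:R.
suff QMP : Q *m M *m P = 1%:M.
  by have := mxrankM_maxl (Q *m M) P; rewrite QMP mxrank1 => /leq_trans->; rewrite ?mxrankM_maxr.
apply/matrixP => b b'; rewrite !mxE (bigD1 (enum_rank (q b'))) //= big1; last first.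
  move=> j nj; rewrite !mxE (_ : (enum_val j == q b') = false) ?mulr0 //.
  by apply: contraNF nj => /eqP <-; rewrite enum_valK.
have bV : (b.+1 < size V)%N by rewrite sizeV ltnS.
rewrite !mxE enum_rankK eqxx mulr1 addr0 (bigD1 (Ordinal bV)) //= big1; last first.
  by move=> i; rewrite !mxE -(inj_eq val_inj) /= => /negbTE ->; rewrite mul0r.
by rewrite !mxE eqxx mul1r addr0 enum_rankK Vq.
Qed.

End Omega1Facts.

Section SquareMatrix.
Variables (R : realType) (t n : nat).

Definition sq_mat (F : nat -> nat -> nat) : dmat R t.+2 n :=
  [ffun p : pos t.+2 n => if p k0 == F (p k1) (tail_sum p %% n)%N :> nat then 1 else 0].

Lemma sq_mat_Omega1 L F : band_latin n L F -> (L <= n)%N -> in_Omega1 (sq_mat F).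
Proof.
move=> [Frow Fcol FL] Ln; split=> [p | k p]; first by rewrite ffunE; case: ifP.
have n0 : (0 < n)%N := leq_ltn_trans (leq0n _) (ltn_ord (p k)).
have Fn y z : (F y z < n)%N := banded_lt y z FL Ln n0.
have [k2 | k2] := ltnP k 2.
  have [->|->] : k = k0 \/ k = k1.
    by case: k k2 => [[|[|k]] kt] //= _; [left|right]; apply/val_inj.
  + under eq_bigr do rewrite ffunE upd_same upd_other // tail_sum_upd_head //.
    rewrite (eq_bigr (fun i : 'I_n => if F (p k1) (tail_sum p %% n)%N == i then 1 else 0));
      last by move=> i _; rewrite eq_sym.
    exact: (@sum_indicator_inj R n id).
  + under eq_bigr do rewrite ffunE upd_same upd_other // tail_sum_upd_head //.
    apply: (@sum_indicator_inj R n (fun y => F y (tail_sum p %% n)%N)) => // i j.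
    by apply: Fcol; rewrite ltn_pmod.
have [nk0 nk1] : k0 != k /\ k1 != k by split; apply: contraTneq k2 => <-.
under eq_bigr do rewrite ffunE (upd_other _ _ nk0) (upd_other _ _ nk1) tail_sum_upd_tail //.
set S := (\sum_(k' < _ | _) _)%N.
apply: (@sum_indicator_inj R n (fun i => F (p k1) ((S + i) %% n)%N)) => // i j ilt jlt e.
have /eqP := Frow _ _ _ (ltn_ord _) (ltn_pmod _ n0) (ltn_pmod _ n0) e.
by rewrite eqn_modDl !modn_small // => /eqP.
Qed.

Lemma sq_mat_vertex L F : band_latin n L F -> (L <= n)%N -> is_vertex (sq_mat F).
Proof.
move=> FL Ln; apply: Omega1_01_vertex; first exact: sq_mat_Omega1 FL Ln.
by move=> p; rewrite ffunE; case: ifP; [right | left].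
Qed.

Lemma sq_mat_band_pos L F (p : pos t.+2 n) : banded n L F -> sq_mat F p != 0 -> band_pos L p.
Proof.
move=> FL; rewrite ffunE; case: ifP => [/eqP e _|]; last by rewrite eqxx.
have [lo hi] := FL (p k1) (tail_sum p %% n)%N; rewrite modnDmr -/(cyc p) -e in lo hi.
by rewrite /band_pos; case: ltnP => [/lo|/hi ->].
Qed.

Section BandedFamily.
Variables (Fam : nat -> nat -> nat -> nat) (K L : nat).
Hypothesis FamL : forall j, (j < K)%N -> band_latin n L (Fam j).
Hypothesis Ln : (L * L.-1 < n)%N.

Let mats := mkseq (fun j => sq_mat (Fam j)) K.

Lemma banded_mats_vertex A : A \in mats -> is_vertex A.
Proof.
case/mapP => j; rewrite mem_iota add0n => jK ->.
exact: sq_mat_vertex (FamL jK) (leq_of_mul_pred_lt Ln).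
Qed.

Lemma banded_mats_hull_Zer1 A : ~~ odd n -> odd t -> in_hull mats A -> in_Zer1 A.
Proof.
move=> even_n odd_t hA; split.
  by apply: hull_Omega1 hA => X /banded_mats_vertex [].
apply: hull_Per_eq0 hA => D /(exists_off_band even_n odd_t Ln) [p pD offp].
exists p => // i; have iK : (i < K)%N := leq_trans (ltn_ord i) (eq_leq (size_mkseq _ _)).
rewrite nth_mkseq //; apply/eqP; apply: contraNT offp.
by apply: sq_mat_band_pos; case: (FamL iK).
Qed.

End BandedFamily.
End SquareMatrix.
Arguments sq_mat R {t n} F.

Section FamilyMatrices.
Variables (R : realType) (t n : nat).
Hypothesis t0 : (0 < t)%N.

Definition pos3 (v0 v1 v2 : nat) : pos t.+2 n.+1 :=
  [ffun k : 'I_t.+2 => inord (if k == k0 then v0 else if k == k1 then v1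
                              else if val k == 2 then v2 else 0)].

Lemma tail_sum_pos3 v0 v1 v2 : (v2 < n.+1)%N -> tail_sum (pos3 v0 v1 v2) = v2.
Proof.
have k2t : (2 < t.+2)%N by rewrite ltnS.
move=> v2n; rewrite /tail_sum (bigD1 (Ordinal k2t)) //= big1 ?addn0.
  by rewrite ffunE /= inordK.
move=> k /andP [k2 nk]; have nk2 : val k != 2 by apply: contra nk => /eqP e; apply/eqP/val_inj.
have [nk0 nk1] : k != k0 /\ k != k1 by split; apply: contraTneq k2 => ->.
by rewrite ffunE (negbTE nk0) (negbTE nk1) (negbTE nk2) inordK.
Qed.

Lemma sq_mat_pos3 F v0 v1 v2 : (v0 < n.+1)%N -> (v1 < n.+1)%N -> (v2 < n.+1)%N ->
  sq_mat R F (pos3 v0 v1 v2) = if v0 == F v1 v2 then 1 else 0.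
Proof. by move=> v0n v1n v2n; rewrite !ffunE tail_sum_pos3 // !inordK ?modn_small. Qed.

Definition family_mats m : seq (dmat R t.+2 n.+1) :=
  mkseq (fun j => sq_mat R (sq_family n.+1 m j)) (n.+1 %/ 2 * m).+2.

Lemma aff_dim_family_mats m : ~~ odd n.+1 -> (2 * m + 2 <= n.+1)%N ->
  ((n.+1 %/ 2 * m).+1 <= aff_dim (family_mats m))%N.
Proof.
move=> even_n mn; set K := (n.+1 %/ 2 * m).+1.
pose q (j : 'I_K) := if val j is b.+1
  then pos3 (2 * (b %% m) + 1) (2 * (b %/ m)) (cyc_col n.+1 (2 * (b %/ m)) (2 * (b %% m)))
  else pos3 (2 * m) 0 (2 * m + 1).
apply: (@aff_dim_ge R _ _ (family_mats m) K q); first by rewrite size_mkseq.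
move=> i j; have iK : (i.+1 < K.+1)%N by rewrite ltnS.
rewrite /family_mats !nth_mkseq // /q; case: j => [[|b] /= bK].
  rewrite !sq_mat_pos3 ?sq_family_corner; try lia.
  by rewrite -[i == _]/(val i == 0)%N /= subr0 eqSS; case: (_ == _).
have b_lt : (b < n.+1 %/ 2 * m)%N by lia.
have m0 : (0 < m)%N by rewrite lt0n; apply: contraTneq b_lt => ->; rewrite muln0.
have Dm := ltn_pmod b m0.
have In : (b %/ m < n.+1 %/ 2)%N by rewrite ltn_divLR //; lia.
have col_n : (cyc_col n.+1 (2 * (b %/ m)) (2 * (b %% m)) < n.+1)%N by apply: ltn_pmod.
rewrite !sq_mat_pos3 ?sq_family_cell; try lia.
by rewrite -[i == _]/(val i == b.+1)%N /= subr0 eqSS; case: (_ == _).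
Qed.

End FamilyMatrices.

(* 4096 = 16^3 takes care of the small orders n < 256, where m may be 0. *)
Lemma sqrt_dim_bound (R : rcfType) n m : ~~ odd n -> (n <= (2 * m + 4) * (2 * m + 3))%N ->
  4096^-1 * (n%:R * Num.sqrt n%:R) <= (n %/ 2 * m).+1%:R :> R.
Proof.
move=> even_n; rewrite -(ler_nat R) !natrM !natrD => n_le.
rewrite [leRHS]mulrS natrM.
have eN : n%:R = 2 * (n %/ 2)%:R :> R by rewrite -natrM; congr _%:R; lia.
set N := n%:R in n_le eN *; set h := (n %/ 2)%:R; set M := m%:R.
have [h0 M0] : 0 <= h /\ 0 <= M by split; apply: ler0n.
have [s0 sN] : 0 <= Num.sqrt N /\ Num.sqrt N * Num.sqrt N = N.
  by split; rewrite ?sqrtr_ge0 // -expr2 sqr_sqrtr // eN mulr_ge0.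
set s := Num.sqrt N in s0 sN *.
have s_lt : s < 2 * M + 4 by nra.
rewrite ler_pdivrMl //; have [s16 | s16] := lerP 16 s.
  have s_le : s <= 4 * M by nra.
  nra.
nra.
Qed.

Theorem corollary2p7 (R : realType) :
  exists c : R, 0 < c /\
    forall d n : nat, ~~ odd n -> (2 < n)%N -> odd d -> (1 < d)%N ->
      exists V : seq (dmat R d n),
        V != [::] /\
        (forall A, A \in V -> is_vertex A) /\
        (forall A : dmat R d n, in_hull V A -> in_Zer1 A) /\
        c * (n%:R * Num.sqrt n%:R) <= (aff_dim V)%:R.
Proof.
exists 4096^-1; split=> [|d n even_n n_gt2 odd_d d_gt1]; first by rewrite invr_gt0.
case: d odd_d d_gt1 => [|[|t]] //= /negbNE odd_t _; case: n even_n n_gt2 => [|n] // even_n n_gt2.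
have t0 : (0 < t)%N by case: t odd_t.
have [m [Ln n_le]] := exists_band_width n_gt2.
have mn : (2 * m + 2 <= n.+1)%N := leq_of_mul_pred_lt Ln.
have FamL j : (j < (n.+1 %/ 2 * m).+2)%N -> band_latin n.+1 (2 * m + 2) (sq_family n.+1 m j).
  by move=> jK; apply: band_latin_sq_family => //; lia.
exists (family_mats R t n m); split; [|split; [|split]].
- by rewrite -size_eq0 size_mkseq.
- exact: banded_mats_vertex FamL Ln.
- by move=> A; apply: (banded_mats_hull_Zer1 FamL Ln (A := A) even_n odd_t).
- apply: le_trans (sqrt_dim_bound R even_n n_le) _.
  by rewrite ler_nat; apply: (aff_dim_family_mats R t0 even_n mn).
Qed.
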